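(* Let $n \geq 2$ be an integer and let $Q_{4n} = \langle a, b \mid a^{2n} = e,\ a^{n} = b^2,\ ab = ba^{-1} \rangle$ be the dicyclic group of order $4n$. Then the order supergraph $\mathcal{S}(Q_{4n})$ is cyclically separable if and only if $n$ is not a power of $2$.
   Context: All graphs are simple and undirected. For a finite group $G$, the order supergraph $\mathcal{S}(G)$ is the graph with vertex set $G$ in which two distinct vertices $x,y$ are adjacent if and only if the order of $x$ divides the order of $y$ or the order of $y$ divides the order of $x$. For a graph $\Gamma$, a vertex cutset is a set $S$ of vertices such that $\Gamma - S$ is disconnected; a cyclic vertex cutset is a vertex cutset $S$ such that $\Gamma - S$ has at least two connected components each of which contains a cycle. $\Gamma$ is called cyclically separable if it has a cyclic vertex cutset. *)

From mathcomp Require Import all_boot all_fingroup.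
Set Implicit Arguments. Unset Strict Implicit. Unset Printing Implicit Defensive.
Local Open Scope group_scope.

(* Simple undirected graphs are given by a vertex set V : {set T} and an
   adjacency relation e : rel T (assumed symmetric and irreflexive). *)

Definition osg_adj (gT : finGroupType) : rel gT :=
  fun x y => (x != y) && ((#[x] %| #[y]) || (#[y] %| #[x])).

Definition rel_in (T : finType) (U : {set T}) (e : rel T) : rel T :=
  fun x y => [&& x \in U, y \in U & e x y].

Definition disconnected_on (T : finType) (U : {set T}) (e : rel T) : Prop :=
  exists x y, [/\ x \in U, y \in U & ~~ connect (rel_in U e) x y].

Definition component_of (T : finType) (U : {set T}) (e : rel T) (C : {set T}) : Prop :=
  exists2 x, x \in U & C = [set y in U | connect (rel_in U e) x y].

Definition is_cycle_in (T : finType) (U : {set T}) (e : rel T) (c : seq T) : bool :=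
  [&& 3 <= size c, uniq c, all (fun x => x \in U) c & path.cycle (rel_in U e) c].

Definition vertex_cutset (T : finType) (V : {set T}) (e : rel T) (S : {set T}) : Prop :=
  S \subset V /\ disconnected_on (V :\: S) e.

Definition cyclic_vertex_cutset (T : finType) (V : {set T}) (e : rel T) (S : {set T}) : Prop :=
  vertex_cutset V e S /\
  exists C1 C2 : {set T},
    [/\ component_of (V :\: S) e C1, component_of (V :\: S) e C2, C1 != C2,
        (exists c, is_cycle_in C1 e c) & (exists c, is_cycle_in C2 e c)].

Definition cyclically_separable (T : finType) (V : {set T}) (e : rel T) : Prop :=
  exists S : {set T}, cyclic_vertex_cutset V e S.

From mathcomp Require Import all_boot all_fingroup all_solvable zify.

Set Implicit Arguments.
Unset Strict Implicit.
Unset Printing Implicit Defensive.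
Local Open Scope group_scope.

(* If n = 2^k then all element orders divide #|G| = 2^(k+2), hence are pairwise
   comparable under divisibility: every induced subgraph of S(G) is complete,
   so there is no vertex cutset at all.  Otherwise n = m 2^k with m > 1 odd.
   With y = a^(2^k), of order 2m, keep only the triangles {y^2, y^-2, y}
   (orders m, m, 2m) and {b, b^-1, ab} (all of order 4) and delete every
   other vertex: since m and 2m are incomparable with 4, no edge joins the two
   triangles, which thus lie in two different components, each with a cycle. *)

Section SeparatedCycles.

Variables (T : finType) (e : rel T).
Hypotheses (e_sym : symmetric e) (e_irr : irreflexive e).

Lemma is_cycle_in_triangle (x y z : T) :
  e x y -> e y z -> e z x -> is_cycle_in [set x; y; z] e [:: x; y; z].
Proof.
have neq u v : e u v -> u != v by apply: contraTneq => ->; rewrite e_irr.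
move=> exy eyz ezx; rewrite /is_cycle_in /= /rel_in !inE !eqxx !orbT /=.
by rewrite negb_or exy eyz ezx (neq x y) // (neq y z) //= eq_sym neq.
Qed.

Lemma cycle_in_component (A U : {set T}) (x : T) (p : seq T) :
  A \subset U -> is_cycle_in A e (x :: p) ->
  is_cycle_in [set y in U | connect (rel_in U e) x y] e (x :: p).
Proof.
move=> sAU /and4P[size_c uniq_c c_in_A cyc_c].
have subAU : subrel (rel_in A e) (rel_in U e).
  by move=> u v /and3P[uA vA euv]; rewrite /rel_in !(subsetP sAU) ?euv.
have c_conn : {subset x :: p <= [set y in U | connect (rel_in U e) x y]}.
  move=> y yc; rewrite inE (subsetP sAU) ?(allP c_in_A) //.
  apply: connect_sub (path_connect cyc_c _); last by rewrite inE mem_rcons yc orbT.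
  by move=> u v /subAU/connect1.
apply/and4P; split=> //; first exact/allP.
apply: (sub_in_cycle (P := mem (x :: p))) cyc_c; last exact/allP.
by move=> u v uc vc /and3P[_ _ euv]; apply/and3P; split=> //; apply: c_conn.
Qed.

Lemma cyclically_separable_of_separated_cycles (V A B : {set T}) (c d : seq T) :
  A :|: B \subset V -> [disjoint A & B] -> {in A & B, forall u v, ~~ e u v} ->
  is_cycle_in A e c -> is_cycle_in B e d -> cyclically_separable V e.
Proof.
move=> sUV disAB sepAB; set U := A :|: B.
case: c => [|x p]; first by case/andP.
case: d => [|y q] cycA; first by case/andP.
move=> cycB.
have VU : V :\: (V :\: U) = U by rewrite setDDr setDv set0U; apply/setIidPr.
have closedA : closed (rel_in U e) (mem A).
  move=> u v /and3P[]; rewrite !inE => uU vU euv.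
  case uA: (u \in A); case vA: (v \in A) => //.
    by move: vU; rewrite vA => /(sepAB u v uA); rewrite euv.
  by move: uU; rewrite uA => /(sepAB v u vA); rewrite e_sym euv.
have xA : x \in A by case/and4P: cycA => _ _ /andP[].
have yB : y \in B by case/and4P: cycB => _ _ /andP[].
have yNA : y \notin A by rewrite (disjointFl disAB yB).
have nxy : ~~ connect (rel_in U e) x y.
  by apply: contra yNA => /(closed_connect closedA) <-.
exists (V :\: U); split.
  by split; [apply: subsetDl | rewrite VU; exists x, y; rewrite !inE xA yB orbT].
rewrite VU.
exists [set z in U | connect (rel_in U e) x z],
       [set z in U | connect (rel_in U e) y z].
split.
- by exists x; rewrite // inE xA.
- by exists y; rewrite // inE yB orbT.
- apply/eqP => /setP/(_ y); rewrite !inE connect0 (negPf nxy) andbF andbT.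
  by rewrite yB orbT.
- by exists (x :: p); apply: cycle_in_component cycA; apply: subsetUl.
- by exists (y :: q); apply: cycle_in_component cycB; apply: subsetUr.
Qed.

End SeparatedCycles.

Lemma pfactor_incomparable (p m i j : nat) :
  prime p -> coprime p m -> (1 < m)%N -> (j < i)%N ->
  ~~ (m * p ^ j %| p ^ i)%N && ~~ (p ^ i %| m * p ^ j)%N.
Proof.
move=> p_pr co_pm m_gt1 lt_ji; apply/andP; split; apply/negP.
  move=> /(dvdn_trans (dvdn_mulr _ (dvdnn m))) m_dvd.
  have : coprime m (p ^ i) by rewrite coprime_sym coprimeXl.
  by rewrite /coprime (gcdn_idPl m_dvd) => /eqP m1; rewrite m1 in m_gt1.
rewrite -(subnK (ltnW lt_ji)) expnD dvdn_pmul2r ?expn_gt0 ?prime_gt0 //.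
have ij_gt0 : (0 < i - j)%N by rewrite subn_gt0.
move=> /(dvdn_trans (dvdn_exp2l p ij_gt0)); rewrite expn1 => p_dvd_m.
by move: co_pm; rewrite prime_coprime // p_dvd_m.
Qed.

Lemma not_pfactor_coprime (p n : nat) :
  prime p -> (0 < n)%N -> ~ (exists k, n = (p ^ k)%N) ->
  exists m k, [/\ coprime p m, (1 < m)%N & n = (m * p ^ k)%N].
Proof.
move=> p_pr n_gt0 n_not_pow; have [m co_pm def_n] := pfactor_coprime p_pr n_gt0.
exists m, (logn p n); split=> //.
case: m co_pm def_n => [|[|m]] // co_pm def_n.
  by move: co_pm; rewrite /coprime gcdn0 => /eqP p1; rewrite p1 in p_pr.
by case: n_not_pow; exists (logn p n); rewrite {1}def_n mul1n.
Qed.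

Lemma osg_adj_sym (gT : finGroupType) : symmetric (@osg_adj gT).
Proof. by move=> x y; rewrite /osg_adj eq_sym orbC. Qed.

Lemma osg_adj_irr (gT : finGroupType) : irreflexive (@osg_adj gT).
Proof. by move=> x; rewrite /osg_adj eqxx. Qed.

Lemma osg_adj_pfactor (gT : finGroupType) (G : {group gT}) (p k : nat) :
  prime p -> #|G| = (p ^ k)%N -> {in G &, forall x y, x != y -> osg_adj x y}.
Proof.
move=> p_pr oG x y xG yG neq_xy; rewrite /osg_adj neq_xy.
have dvd_order z : z \in G -> (#[z] %| p ^ k)%N by rewrite -oG => /order_dvdG.
have [i _ ->] := dvdn_pfactor _ _ p_pr (dvd_order x xG).
have [j _ ->] := dvdn_pfactor _ _ p_pr (dvd_order y yG).
by rewrite !dvdn_Pexp2l ?prime_gt1 // leq_total.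
Qed.

Lemma not_cyclically_separable_pfactor (gT : finGroupType) (G : {group gT})
    (p k : nat) :
  prime p -> #|G| = (p ^ k)%N -> ~ cyclically_separable G (@osg_adj gT).
Proof.
move=> p_pr oG [S [[_ [x [y [xU yU /negP nconn]]]] _]]; apply: nconn.
have [-> | neq_xy] := eqVneq x y; first exact: connect0.
apply/connect1; rewrite /rel_in xU yU (osg_adj_pfactor p_pr oG) //.
  by case/setDP: xU.
by case/setDP: yU.
Qed.

Lemma invg_neq (gT : finGroupType) (x : gT) : ~~ (#[x] %| 2)%N -> x^-1 != x.
Proof. by apply: contraNneq => xVx; rewrite order_dvdn expgS expg1 -{1}xVx mulVg. Qed.

Lemma osg_cycle_inv (gT : finGroupType) (x y : gT) :
  x^-1 != x -> y != x -> y != x^-1 -> (#[x] %| #[y])%N ->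
  is_cycle_in [set x; x^-1; y] (@osg_adj gT) [:: x; x^-1; y].
Proof.
move=> xVx yx yxV dvd_xy; apply: (is_cycle_in_triangle (@osg_adj_irr gT)).
- by rewrite /osg_adj eq_sym xVx orderV dvdnn.
- by rewrite /osg_adj eq_sym yxV orderV dvd_xy.
- by rewrite /osg_adj yx dvd_xy orbT.
Qed.

Lemma osg_cycle_odd_part (gT : finGroupType) (y : gT) (m : nat) :
  coprime 2 m -> (1 < m)%N -> #[y] = (m * 2)%N ->
  is_cycle_in [set y ^+ 2; (y ^+ 2)^-1; y] (@osg_adj gT)
              [:: y ^+ 2; (y ^+ 2)^-1; y].
Proof.
move=> co2m m_gt1 order_y.
have order_y2 : #[y ^+ 2] = m by rewrite orderXdiv order_y ?dvdn_mull // mulnK.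
have neq_order (u v : gT) : #[u] != #[v] -> u != v by apply: contraNneq => ->.
apply: osg_cycle_inv.
- apply: invg_neq; rewrite order_y2.
  have := pfactor_incomparable (isT : prime 2) co2m m_gt1 (isT : 0 < 1).
  by rewrite muln1 => /andP[].
- by apply: neq_order; rewrite order_y order_y2; lia.
- by apply: neq_order; rewrite order_y orderV order_y2; lia.
- by rewrite order_y order_y2 dvdn_mulr.
Qed.

Lemma card_mul_cycles_le (gT : finGroupType) (a b : gT) :
  b ^+ 2 \in <[a]> -> #|<[a]> * <[b]>| <= (2 * #[a])%N.
Proof.
move=> b2a; have := mul_cardG <[a]> <[b]>; rewrite -!orderE.
set I := #|_ :&: _| => card_eq.
have I_gt0 : (0 < I)%N by apply: cardG_gt0.
(* b^2 lies in <[a]>, so <[a]> :&: <[b]> has index at most 2 in <[b]>. *)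
have le_b : (#[b] <= 2 * I)%N.
  have /subset_leq_card : <[b ^+ 2]> \subset <[a]> :&: <[b]>.
    by rewrite cycle_subG inE b2a mem_cycle.
  rewrite -orderE -/I => le_b2.
  apply: (@leq_trans (2 * #[b ^+ 2])); last by rewrite leq_mul2l le_b2 orbT.
  apply: dvdn_leq; first by rewrite muln_gt0 order_gt0.
  by rewrite order_dvdn expgM expg_order.
rewrite -(leq_pmul2r I_gt0) -card_eq (mulnC 2) -mulnA.
by rewrite leq_mul2l le_b orbT.
Qed.

Section Dicyclic.

Variables (gT : finGroupType) (n : nat) (a b : gT).
Hypotheses (a_exp : a ^+ (2 * n) = 1) (an_b2 : a ^+ n = b ^+ 2)
           (ab_rel : a * b = b * a^-1).

Lemma dicyclic_conj : a ^ b = a^-1.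
Proof. by rewrite conjgE ab_rel mulKg. Qed.

Lemma dicyclic_order_a : #|<[a]> <*> <[b]>| = (4 * n)%N -> #[a] = (2 * n)%N.
Proof.
have nab : <[b]> \subset 'N(<[a]>).
  by rewrite cycle_subG; apply/normP; rewrite -cycleJ dicyclic_conj cycleV.
move=> card_ab; have n_gt0 : (0 < n)%N.
  by move: (cardG_gt0 (<[a]> <*> <[b]>)); rewrite card_ab muln_gt0.
have b2a : b ^+ 2 \in <[a]> by rewrite -an_b2 mem_cycle.
have := card_mul_cycles_le b2a; rewrite -norm_joinEr // card_ab.
have : (#[a] <= 2 * n)%N by rewrite dvdn_leq ?muln_gt0 // order_dvdn a_exp.
lia.
Qed.

Hypotheses (order_a : #[a] = (2 * n)%N) (n_gt1 : (1 < n)%N).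

Lemma dicyclic_order_b2 : #[b ^+ 2] = 2.
Proof. by rewrite -an_b2 orderXdiv order_a ?dvdn_mull // mulnK // ltnW. Qed.

Lemma dicyclic_order_b : #[b] = 4.
Proof. exact: orderXprime dicyclic_order_b2 _ _. Qed.

Lemma dicyclic_order_ab : #[a * b] = 4.
Proof.
apply: orderXprime _ _ (dvdnn 2) => //.
have -> : (a * b) ^+ 2 = b ^+ 2 by rewrite !expg2 {1}ab_rel -mulgA mulKg.
by rewrite dicyclic_order_b2.
Qed.

Lemma dicyclic_ab_neq_b : a * b != b.
Proof.
apply/eqP => /(canRL (mulgK b)); rewrite mulgV => a1.
by move: order_a; rewrite a1 order1; lia.
Qed.

Lemma dicyclic_ab_neq_bV : a * b != b^-1.
Proof.
apply/eqP => /(canRL (mulgK b)); rewrite -invMg -expg2 => def_a.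
by move: order_a; rewrite def_a orderV dicyclic_order_b2; lia.
Qed.

Lemma dicyclic_order4_cycle :
  is_cycle_in [set b; b^-1; a * b] (@osg_adj gT) [:: b; b^-1; a * b].
Proof.
apply: osg_cycle_inv.
- by apply: invg_neq; rewrite dicyclic_order_b.
- exact: dicyclic_ab_neq_b.
- exact: dicyclic_ab_neq_bV.
- by rewrite dicyclic_order_b dicyclic_order_ab.
Qed.

Lemma dicyclic_cyclically_separable (G : {group gT}) :
  a \in G -> b \in G -> ~ (exists k, n = (2 ^ k)%N) ->
  cyclically_separable G (@osg_adj gT).
Proof.
move=> aG bG n_not_pow2.
have [m [k [co2m m_gt1 def_n]]] :=
  not_pfactor_coprime (isT : prime 2) (ltnW n_gt1) n_not_pow2.
set y := a ^+ (2 ^ k).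
have order_y : #[y] = (m * 2)%N.
  have def_oa : #[a] = (2 * m * 2 ^ k)%N by rewrite order_a def_n mulnA.
  by rewrite orderXdiv def_oa ?dvdn_mull // mulnK ?expn_gt0 // mulnC.
set A := [set y ^+ 2; (y ^+ 2)^-1; y]; set B := [set b; b^-1; a * b].
have order_A : {in A, forall u, exists2 j, (j < 2)%N & #[u] = (m * 2 ^ j)%N}.
  have order_y2 : #[y ^+ 2] = (m * 2 ^ 0)%N.
    by rewrite orderXdiv order_y ?dvdn_mull // mulnK // muln1.
  by move=> u; rewrite !inE -orbA => /or3P[] /eqP->;
    [exists 0%N | exists 0%N; rewrite ?orderV | exists 1%N].
have order_B : {in B, forall v, #[v] = (2 ^ 2)%N}.
  by move=> v; rewrite !inE -orbA => /or3P[] /eqP->;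
    rewrite ?orderV ?dicyclic_order_b ?dicyclic_order_ab.
have incomp_AB :
    {in A & B, forall u v, ~~ (#[u] %| #[v])%N && ~~ (#[v] %| #[u])%N}.
  by move=> u v /order_A[j lt_j2 ->] /order_B ->; apply: pfactor_incomparable.
apply: (cyclically_separable_of_separated_cycles (@osg_adj_sym gT) _ _ _
         (osg_cycle_odd_part co2m m_gt1 order_y) dicyclic_order4_cycle).
- have yG : y \in G by apply: groupX.
  by rewrite !subUset !sub1set !groupV groupX // yG bG groupM.
- apply/pred0P => u /=; apply/negbTE/negP => /andP[uA uB].
  by have := incomp_AB u u uA uB; rewrite dvdnn.
- move=> u v uA vB; rewrite /osg_adj.
  by case/andP: (incomp_AB u v uA vB) => /negPf-> /negPf->; rewrite andbF.
Qed.

End Dicyclic.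

Theorem mainTheorem2 (n : nat) (gT : finGroupType) (G : {group gT}) :
  2 <= n ->
  G \isog Grp (a : b : a ^+ (2 * n) = 1, a ^+ n = b ^+ 2, a * b = b * a^-1) ->
  #|G| = (4 * n)%N ->
  (cyclically_separable G (@osg_adj gT) <-> ~ (exists k, n = (2 ^ k)%N)).
Proof.
move=> n_gt1 isoG oG; split.
  move=> sepG [k def_n].
  apply: (not_cyclically_separable_pfactor (k := k.+2) (isT : prime 2) _ sepG).
  by rewrite oG def_n !expnS mulnA.
move=> n_not_pow2.
case/existsP: (isoGrp_hom isoG) => -[a b] /= /eqP[defG a_exp an_b2 ab_rel].
have aG : a \in G by rewrite -defG mem_gen // inE cycle_id.
have bG : b \in G by rewrite -defG mem_gen // inE cycle_id orbT.
have order_a : #[a] = (2 * n)%N.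
  by apply: (dicyclic_order_a a_exp an_b2 ab_rel); rewrite -oG -defG.
exact: (dicyclic_cyclically_separable an_b2 ab_rel order_a).
Qed.
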